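(* Let $X:[0,S]\to\mathbb R$ be any function, $c>0$, $m_0\ge0$ an integer, and let $\Pi_n=\{t_0,\dots,t_n\}$ with $0\le t_0<t_1<\dots<t_n\le S$. Let $N_0\ge m_0$ be such that $J_m=\emptyset$ for all $m\ge N_0$, and let $N\ge N_0$, $N>m_0$. Then $$\sum_{i=1}^n(|X(t_i)-X(t_{i-1})|-c)_+\le V_1+V_2+W_1+W_2+\sum_{i=1}^n\sum_{s\in\{i-1,i\}}|X(t_s)-X(t_s^{N+1})|,$$ where $V_1=\sum_{m=0}^{m_0}\sum_{i\in J_m}\sum_{l=m+1}^{m_0}\sum_{s\in\{i-1,i\}}|X(t_s^l)-X(t_s^{l+1})|$, $W_1=\sum_{m=0}^{m_0}\sum_{i\in J_m}|X(t_i^{m+1})-X(t_{i-1}^{m+1})|$, $V_2=\sum_{m=0}^{\infty}\sum_{i\in J_m}\sum_{l=\bar m+1}^{N}\sum_{s\in\{i-1,i\}}\left(|X(t_s^l)-X(t_s^{l+1})|-2^{-l+\bar m}\frac c3\right)_+$, $W_2=\sum_{m=m_0+1}^{\infty}\sum_{i\in J_m}\left(|X(t_i^{m+1})-X(t_{i-1}^{m+1})|-\frac c3\right)_+$.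
   Context: Fix $S>0$, $q\in(0,1)$, $d(s,t)=|s-t|^q$ on $[0,S]$, and $r\ge4$. For $n\ge0$ let $T_n=\{kr^{-n/q}S:k=0,1,2,\dots\}\cap[0,S]$ and $\pi_n(t)=\max\{s\in T_n:s\le t\}$ for $t\in[0,S]$. For the partition $\Pi_n$ and $m=0,1,2,\dots$ let $J_m=\{i\in\{1,\dots,n\}:r^{-m-1}S^q<d(t_{i-1},t_i)\le r^{-m}S^q\}$. Given $N$, define $t_i^{N+1}=\pi_{N+1}(t_i)$ and recursively $t_i^l=\pi_l(t_i^{l+1})$ for $l=N,N-1,\dots,0$, $i=0,\dots,n$. Write $\bar m=\max\{m,m_0\}$ and $x_+=\max\{x,0\}$. *)

From Stdlib Require Import Reals Lra Lia List.
Open Scope R_scope.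

(* sum_range lo hi f = f lo + ... + f hi  (0 if hi < lo) *)
Definition sum_range (lo hi : nat) (f : nat -> R) : R :=
  fold_right (fun k acc => f k + acc) 0 (seq lo (S hi - lo)).

Definition pos_part (x : R) : R := Rmax x 0.

Definition dist_q (q s t : R) : R := Rpower (Rabs (s - t)) q.

Definition in_T (Sx q r : R) (n : nat) (s : R) : Prop :=
  (exists k : nat, s = INR k * Rpower r (- INR n / q) * Sx) /\ 0 <= s <= Sx.

Definition is_pi (Sx q r : R) (n : nat) (t p : R) : Prop :=
  in_T Sx q r n p /\ p <= t /\ (forall s, in_T Sx q r n s -> s <= t -> s <= p).

Definition J_lo (Sx q r : R) (m : nat) : R := Rpower Sx q / r ^ (S m).
Definition J_hi (Sx q r : R) (m : nat) : R := Rpower Sx q / r ^ m.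

(* boolean membership i ∈ J_m for the partition t (range 1..n handled by sums) *)
Definition in_Jb (Sx q r : R) (t : nat -> R) (m i : nat) : bool :=
  if Rlt_dec (J_lo Sx q r m) (dist_q q (t (pred i)) (t i)) then
    if Rle_dec (dist_q q (t (pred i)) (t i)) (J_hi Sx q r m) then true else false
  else false.

Definition sum_J (Sx q r : R) (t : nat -> R) (n m : nat) (f : nat -> R) : R :=
  sum_range 1 n (fun i => if in_Jb Sx q r t m i then f i else 0).

Fixpoint down (pi : nat -> R -> R) (j top : nat) (y : R) : R :=
  match j with
  | O => y
  | S j' => pi (top - S j')%nat (down pi j' top y)
  end.

(* t^l for x = t_i: t^{N+1} = pi_{N+1}(x), t^l = pi_l(t^{l+1}) for l <= N *)
Definition tlev (pi : nat -> R -> R) (N : nat) (x : R) (l : nat) : R :=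
  down pi (S N - l) (S N) (pi (S N) x).

Definition sum_s (i : nat) (g : nat -> R) : R := g (pred i) + g i.

From Stdlib Require Import Reals Lra Lia List.
Open Scope R_scope.

(* Each increment [t_{i-1}, t_i] of the partition has a d-length
   lying in exactly one class J_m, and m < N0 by hypothesis.  Link X(t_{i-1})
   to X(t_i) along the chain
     t_{i-1}, t_{i-1}^{N+1}, ..., t_{i-1}^{m+1}, t_i^{m+1}, ..., t_i^{N+1}, t_i;
   by the triangle inequality |X t_i - X t_{i-1}| is at most the two end
   errors, the bridge |X t_i^{m+1} - X t_{i-1}^{m+1}| and the variations of the
   two chains.  The threshold c is split into thirds: the links of each chain
   at levels l > k = max(m, m0) give up the weights 2^{k-l} c/3, whose total is
   at most c/3 (geometric series), and the bridge gives up the last c/3.  When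
   m <= m0 the bridge and the links at levels m+1..m0 are kept in full (V1, W1);
   when m > m0 only positive parts remain (V2, W2).  Summing this estimate over
   the increments and exchanging the sums over i and m gives the theorem.
   The estimate holds for arbitrary chains. *)

Definition lsum (l : list nat) (f : nat -> R) : R :=
  fold_right (fun k acc => f k + acc) 0 l.

Lemma sum_range_lsum (lo hi : nat) (f : nat -> R) :
  sum_range lo hi f = lsum (seq lo (S hi - lo)) f.
Proof. reflexivity. Qed.

Lemma lsum_app (l1 l2 : list nat) (f : nat -> R) :
  lsum (l1 ++ l2) f = lsum l1 f + lsum l2 f.
Proof. induction l1 as [|k l1 IH]; simpl; [lra | rewrite IH; lra]. Qed.

Lemma lsum_plus (l : list nat) (f g : nat -> R) :
  lsum l (fun k => f k + g k) = lsum l f + lsum l g.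
Proof. induction l as [|k l IH]; simpl; [lra | rewrite IH; lra]. Qed.

Lemma lsum_le (l : list nat) (f g : nat -> R) :
  (forall k, In k l -> f k <= g k) -> lsum l f <= lsum l g.
Proof.
  induction l as [|k l IH]; simpl; intros H; [lra |].
  pose proof (H k (or_introl eq_refl)).
  assert (lsum l f <= lsum l g) by (apply IH; auto). lra.
Qed.

Lemma lsum_nonneg (l : list nat) (f : nat -> R) :
  (forall k, In k l -> 0 <= f k) -> 0 <= lsum l f.
Proof.
  induction l as [|k l IH]; simpl; intros H; [lra |].
  pose proof (H k (or_introl eq_refl)).
  assert (0 <= lsum l f) by (apply IH; auto). lra.
Qed.

Lemma lsum_term (l : list nat) (f : nat -> R) (k : nat) :
  In k l -> (forall j, In j l -> 0 <= f j) -> f k <= lsum l f.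
Proof.
  induction l as [|a l IH]; simpl; intros Hk H; [contradiction |].
  pose proof (H a (or_introl eq_refl)).
  assert (0 <= lsum l f) by (apply lsum_nonneg; auto).
  destruct Hk as [<- | Hk]; [lra |].
  assert (f k <= lsum l f) by (apply IH; auto). lra.
Qed.

Lemma lsum_swap (l1 l2 : list nat) (g : nat -> nat -> R) :
  lsum l1 (fun m => lsum l2 (g m)) = lsum l2 (fun i => lsum l1 (fun m => g m i)).
Proof.
  induction l1 as [|a l1 IH]; simpl.
  - induction l2 as [|b l2 IH2]; simpl; [reflexivity | rewrite <- IH2; lra].
  - rewrite IH, <- lsum_plus. reflexivity.
Qed.

Lemma sum_range_swap (a b c d : nat) (g : nat -> nat -> R) :
  sum_range a b (fun m => sum_range c d (g m)) =
  sum_range c d (fun i => sum_range a b (fun m => g m i)).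
Proof. apply lsum_swap. Qed.

Lemma sum_range_plus (a b : nat) (f g : nat -> R) :
  sum_range a b (fun k => f k + g k) = sum_range a b f + sum_range a b g.
Proof. apply lsum_plus. Qed.

Lemma sum_range_le (a b : nat) (f g : nat -> R) :
  (forall k, (a <= k <= b)%nat -> f k <= g k) -> sum_range a b f <= sum_range a b g.
Proof. intros H. apply lsum_le. intros k Hk. apply in_seq in Hk. apply H. lia. Qed.

Lemma sum_range_nonneg (a b : nat) (f : nat -> R) :
  (forall k, 0 <= f k) -> 0 <= sum_range a b f.
Proof. intros H. apply lsum_nonneg. intros k _. apply H. Qed.

Lemma sum_range_term (a b k : nat) (f : nat -> R) :
  (a <= k <= b)%nat -> (forall j, 0 <= f j) -> f k <= sum_range a b f.
Proof. intros Hk H. apply lsum_term; [apply in_seq; lia | intros j _; apply H]. Qed.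

Lemma sum_range_split (lo mid hi : nat) (f : nat -> R) :
  (lo <= S mid)%nat -> (mid <= hi)%nat ->
  sum_range lo hi f = sum_range lo mid f + sum_range (S mid) hi f.
Proof.
  intros H1 H2. rewrite !sum_range_lsum.
  replace (S hi - lo)%nat with ((S mid - lo) + (S hi - S mid))%nat by lia.
  rewrite seq_app, lsum_app.
  replace (lo + (S mid - lo))%nat with (S mid) by lia. reflexivity.
Qed.

Definition class_sum (P : nat -> bool) (a b : nat) (F : nat -> R) : R :=
  sum_range a b (fun k => if P k then F k else 0).

Lemma class_sum_nonneg (P : nat -> bool) (a b : nat) (F : nat -> R) :
  (forall k, 0 <= F k) -> 0 <= class_sum P a b F.
Proof. intros H. apply sum_range_nonneg. intros k. destruct (P k); [apply H | lra]. Qed.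

Lemma class_sum_term (P : nat -> bool) (a b m : nat) (F : nat -> R) :
  (a <= m <= b)%nat -> P m = true -> (forall k, 0 <= F k) ->
  F m <= class_sum P a b F.
Proof.
  intros Hm HP H.
  replace (F m) with ((fun k => if P k then F k else 0) m) by (rewrite HP; reflexivity).
  apply (sum_range_term a b m (fun k => if P k then F k else 0)); [exact Hm |]. intros k. destruct (P k); [apply H | lra].
Qed.

Lemma pos_part_ge0 (x : R) : 0 <= pos_part x.
Proof. apply Rmax_r. Qed.

Lemma pos_part_ge (x : R) : x <= pos_part x.
Proof. apply Rmax_l. Qed.

Lemma telescope (y : nat -> R) (j lo : nat) :
  Rabs (y (lo + j)%nat - y lo) <= lsum (seq lo j) (fun l => Rabs (y l - y (S l))).
Proof.
  revert lo; induction j as [|j IH]; intros lo; simpl.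
  - rewrite Nat.add_0_r, Rminus_diag, Rabs_R0. lra.
  - specialize (IH (S lo)). replace (lo + S j)%nat with (S lo + j)%nat by lia.
    pose proof (Rabs_triang (y (S lo + j)%nat - y (S lo)) (y (S lo) - y lo)) as T.
    replace (y (S lo + j)%nat - y (S lo) + (y (S lo) - y lo))
      with (y (S lo + j)%nat - y lo) in T by ring.
    rewrite (Rabs_minus_sym (y (S lo))) in T. lra.
Qed.

Lemma sum_range_telescope (y : nat -> R) (m N : nat) : (m <= N)%nat ->
  Rabs (y (S N) - y (S m)) <= sum_range (S m) N (fun l => Rabs (y l - y (S l))).
Proof.
  intros H. rewrite sum_range_lsum. pose proof (telescope y (S N - S m) (S m)) as T.
  replace (S m + (S N - S m))%nat with (S N) in T by lia. exact T.
Qed.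

Lemma geometric_weights (k j : nat) (C : R) :
  lsum (seq (S k) j) (fun l => 2 ^ k / 2 ^ l * C) = C * (1 - / 2 ^ j).
Proof.
  induction j as [|j IH].
  - simpl. field.
  - rewrite seq_S, lsum_app, IH. simpl.
    replace (S (k + j)) with (S k + j)%nat by lia.
    rewrite pow_add. simpl.
    assert (2 ^ k <> 0) by (apply pow_nonzero; lra).
    assert (2 ^ j <> 0) by (apply pow_nonzero; lra).
    field. auto.
Qed.

Lemma geometric_weights_le (k N : nat) (C : R) : 0 <= C ->
  sum_range (S k) N (fun l => 2 ^ k / 2 ^ l * C) <= C.
Proof.
  intros HC. rewrite sum_range_lsum, geometric_weights.
  assert (0 < / 2 ^ (S N - S k)) by (apply Rinv_0_lt_compat, pow_lt; lra).
  nra.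
Qed.

Lemma excess_bound (a : nat -> R) (k N : nat) (c : R) : 0 < c ->
  sum_range (S k) N a <=
  sum_range (S k) N (fun l => pos_part (a l - 2 ^ k / 2 ^ l * (c / 3))) + c / 3.
Proof.
  intros Hc.
  apply Rle_trans with (sum_range (S k) N
    (fun l => pos_part (a l - 2 ^ k / 2 ^ l * (c / 3)) + 2 ^ k / 2 ^ l * (c / 3))).
  - apply sum_range_le. intros l _.
    pose proof (pos_part_ge (a l - 2 ^ k / 2 ^ l * (c / 3))). lra.
  - rewrite sum_range_plus. pose proof (geometric_weights_le k N (c / 3)). lra.
Qed.

Section Chains.

(* Two chains of values y0 l, y1 l (l = levels) approximating x0 and x1. *)
Variables (x0 x1 : R) (y0 y1 : nat -> R).

Definition chain_sum (lo hi : nat) : R :=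
  sum_range lo hi (fun l => Rabs (y0 l - y0 (S l)) + Rabs (y1 l - y1 (S l))).

Definition excess_sum (c : R) (k N : nat) : R :=
  sum_range (S k) N (fun l =>
      pos_part (Rabs (y0 l - y0 (S l)) - 2 ^ k / 2 ^ l * (c / 3))
    + pos_part (Rabs (y1 l - y1 (S l)) - 2 ^ k / 2 ^ l * (c / 3))).

Lemma chain_sum_nonneg (lo hi : nat) : 0 <= chain_sum lo hi.
Proof.
  apply sum_range_nonneg. intros l.
  pose proof (Rabs_pos (y0 l - y0 (S l))). pose proof (Rabs_pos (y1 l - y1 (S l))). lra.
Qed.

Lemma excess_sum_nonneg (c : R) (k N : nat) : 0 <= excess_sum c k N.
Proof.
  apply sum_range_nonneg. intros l.
  apply Rplus_le_le_0_compat; apply pos_part_ge0.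
Qed.

Lemma chain_excess (c : R) (k N : nat) : 0 < c ->
  chain_sum (S k) N <= excess_sum c k N + 2 * (c / 3).
Proof.
  intros Hc. unfold chain_sum, excess_sum. rewrite !sum_range_plus.
  pose proof (excess_bound (fun l => Rabs (y0 l - y0 (S l))) k N c Hc).
  pose proof (excess_bound (fun l => Rabs (y1 l - y1 (S l))) k N c Hc).
  lra.
Qed.

Lemma chain_triangle (m N : nat) : (m <= N)%nat ->
  Rabs (x1 - x0) <= Rabs (x0 - y0 (S N)) + Rabs (x1 - y1 (S N))
                    + Rabs (y1 (S m) - y0 (S m)) + chain_sum (S m) N.
Proof.
  intros H. unfold chain_sum. rewrite sum_range_plus.
  pose proof (sum_range_telescope y0 m N H). pose proof (sum_range_telescope y1 m N H).
  pose proof (Rabs_triang (x1 - y1 (S N)) (y1 (S N) - y1 (S m))).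
  pose proof (Rabs_triang (x1 - y1 (S N) + (y1 (S N) - y1 (S m))) (y1 (S m) - y0 (S m))).
  pose proof (Rabs_triang (x1 - y1 (S N) + (y1 (S N) - y1 (S m)) + (y1 (S m) - y0 (S m)))
                          (y0 (S m) - y0 (S N))).
  pose proof (Rabs_triang (x1 - y1 (S N) + (y1 (S N) - y1 (S m)) + (y1 (S m) - y0 (S m))
                           + (y0 (S m) - y0 (S N))) (y0 (S N) - x0)).
  replace (x1 - y1 (S N) + (y1 (S N) - y1 (S m)) + (y1 (S m) - y0 (S m))
           + (y0 (S m) - y0 (S N)) + (y0 (S N) - x0)) with (x1 - x0) in * by ring.
  rewrite (Rabs_minus_sym (y0 (S m))), (Rabs_minus_sym (y0 (S N)) x0) in *. lra.
Qed.

(* The chaining estimate: with the bridge at level m+1 and the weights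
   starting after level k, the threshold c is absorbed in thirds. *)
Lemma chain_estimate (m k N : nat) (c : R) : 0 < c -> (m <= k <= N)%nat ->
  pos_part (Rabs (x1 - x0) - c) <=
    chain_sum (S m) k + excess_sum c k N
  + pos_part (Rabs (y1 (S m) - y0 (S m)) - c / 3)
  + (Rabs (x0 - y0 (S N)) + Rabs (x1 - y1 (S N))).
Proof.
  intros Hc Hk.
  pose proof (chain_triangle m N ltac:(lia)) as T.
  assert (Hsplit : chain_sum (S m) N = chain_sum (S m) k + chain_sum (S k) N)
    by (apply sum_range_split; lia).
  pose proof (chain_excess c k N Hc).
  pose proof (pos_part_ge (Rabs (y1 (S m) - y0 (S m)) - c / 3)).
  pose proof (chain_sum_nonneg (S m) k). pose proof (excess_sum_nonneg c k N).
  pose proof (pos_part_ge0 (Rabs (y1 (S m) - y0 (S m)) - c / 3)).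
  pose proof (Rabs_pos (x0 - y0 (S N))). pose proof (Rabs_pos (x1 - y1 (S N))).
  apply Rmax_lub; lra.
Qed.

(* The estimate for an increment of class m < N0 (P = membership in the classes),
   spread over the class sums that make up V1, V2, W1 and W2. *)
Lemma increment_estimate (P : nat -> bool) (m m0 N0 N : nat) (c : R) :
  0 < c -> P m = true -> (m <= N0)%nat -> (m0 <= N0)%nat -> (N0 <= N)%nat ->
  (m0 < N)%nat ->
  pos_part (Rabs (x1 - x0) - c) <=
    class_sum P 0 m0 (fun k => chain_sum (S k) m0)
  + class_sum P 0 N0 (fun k => excess_sum c (Nat.max k m0) N)
  + class_sum P 0 m0 (fun k => Rabs (y1 (S k) - y0 (S k)))
  + class_sum P (S m0) N0 (fun k => pos_part (Rabs (y1 (S k) - y0 (S k)) - c / 3))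
  + (Rabs (x0 - y0 (S N)) + Rabs (x1 - y1 (S N))).
Proof.
  intros Hc HP HmN0 Hm0 HN HmN.
  pose proof (chain_estimate m (Nat.max m m0) N c Hc ltac:(lia)) as E.
  pose proof (class_sum_term P 0 N0 m (fun k => excess_sum c (Nat.max k m0) N)
                ltac:(lia) HP (fun k => excess_sum_nonneg c _ N)) as V2m.
  cbv beta in V2m.
  destruct (Nat.le_gt_cases m m0) as [Hmm | Hmm].
  - (* coarse class: the bridge and the links up to level m0 are kept in full *)
    rewrite (Nat.max_r m m0 Hmm) in E, V2m.
    pose proof (class_sum_term P 0 m0 m (fun k => chain_sum (S k) m0)
                  ltac:(lia) HP (fun k => chain_sum_nonneg _ _)) as V1m.
    pose proof (class_sum_term P 0 m0 m (fun k => Rabs (y1 (S k) - y0 (S k)))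
                  ltac:(lia) HP (fun k => Rabs_pos _)) as W1m.
    pose proof (class_sum_nonneg P (S m0) N0
                  (fun k => pos_part (Rabs (y1 (S k) - y0 (S k)) - c / 3))
                  (fun k => pos_part_ge0 _)).
    assert (pos_part (Rabs (y1 (S m) - y0 (S m)) - c / 3) <= Rabs (y1 (S m) - y0 (S m)))
      by (pose proof (Rabs_pos (y1 (S m) - y0 (S m))); apply Rmax_lub; lra).
    cbv beta in *. lra.
  - (* fine class: only positive parts remain, and no links below level m *)
    rewrite (Nat.max_l m m0 ltac:(lia)) in E, V2m.
    assert (Hempty : chain_sum (S m) m = 0)
      by (unfold chain_sum, sum_range; rewrite Nat.sub_diag; reflexivity).
    pose proof (class_sum_term P (S m0) N0 m
                  (fun k => pos_part (Rabs (y1 (S k) - y0 (S k)) - c / 3))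
                  ltac:(lia) HP (fun k => pos_part_ge0 _)) as W2m.
    pose proof (class_sum_nonneg P 0 m0 (fun k => chain_sum (S k) m0)
                  (fun k => chain_sum_nonneg _ _)).
    pose proof (class_sum_nonneg P 0 m0 (fun k => Rabs (y1 (S k) - y0 (S k)))
                  (fun k => Rabs_pos _)).
    cbv beta in *. lra.
Qed.

End Chains.

(* Every length d in (0, A] lies in some class (A r^{-m-1}, A r^{-m}],
   found by searching downward from a level k where it is already above the
   lower threshold. *)
Lemma class_search (A r d : R) (k : nat) : d <= A -> A / r ^ (S k) < d ->
  exists m, A / r ^ (S m) < d /\ d <= A / r ^ m.
Proof.
  induction k as [|k IH]; intros H1 H2.
  - exists O. split; [exact H2 |]. simpl. rewrite Rdiv_1_r. exact H1.
  - destruct (Rlt_dec (A / r ^ (S k)) d) as [h | h].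
    + exact (IH H1 h).
    + exists (S k). split; [exact H2 | lra].
Qed.

Lemma class_exists (A r d : R) : 1 < r -> 0 < d -> d <= A ->
  exists m, A / r ^ (S m) < d /\ d <= A / r ^ m.
Proof.
  intros Hr Hd H.
  destruct (Pow_x_infinity r ltac:(rewrite Rabs_right; lra) (A / d)) as [K HK].
  specialize (HK K (le_n K)).
  assert (HrK : 0 < r ^ K) by (apply pow_lt; lra).
  rewrite Rabs_right in HK by lra.
  apply (class_search A r d K H).
  assert (HA : A < d * r ^ S K).
  { assert (A / d * d = A) by (field; lra).
    assert (r ^ K < r * r ^ K) by nra.
    simpl. nra. }
  apply Rmult_lt_reg_r with (r ^ S K); [apply pow_lt; lra |].
  unfold Rdiv. rewrite Rmult_assoc, Rinv_l by (apply pow_nonzero; lra). lra.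
Qed.

Lemma partition_monotone (t : nat -> R) (n : nat) :
  (forall i, (1 <= i <= n)%nat -> t (pred i) < t i) ->
  forall j k, (j <= k <= n)%nat -> t j <= t k.
Proof.
  intros Hinc j k Hjk. induction k as [|k IH].
  - replace j with O by lia. lra.
  - destruct (Nat.eq_dec j (S k)) as [-> | Hne]; [lra |].
    pose proof (Hinc (S k) ltac:(lia)). simpl in *. specialize (IH ltac:(lia)). lra.
Qed.

Lemma increment_class (Sx q r : R) (t : nat -> R) (n N0 i : nat) :
  0 < q -> 1 < r -> 0 <= t O -> t n <= Sx ->
  (forall i, (1 <= i <= n)%nat -> t (pred i) < t i) ->
  (forall m i, (N0 <= m)%nat -> (1 <= i <= n)%nat ->
     ~ (J_lo Sx q r m < dist_q q (t (pred i)) (t i) /\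
        dist_q q (t (pred i)) (t i) <= J_hi Sx q r m)) ->
  (1 <= i <= n)%nat ->
  exists m, in_Jb Sx q r t m i = true /\ (m < N0)%nat.
Proof.
  intros Hq Hr Ht0 Htn Hinc HJ Hi.
  pose proof (partition_monotone t n Hinc O (pred i) ltac:(lia)).
  pose proof (partition_monotone t n Hinc i n ltac:(lia)).
  pose proof (Hinc i Hi).
  assert (Hd0 : 0 < dist_q q (t (pred i)) (t i)) by apply exp_pos.
  assert (Hd1 : dist_q q (t (pred i)) (t i) <= Rpower Sx q).
  { apply Rle_Rpower_l; [lra |].
    rewrite Rabs_minus_sym, Rabs_right by lra. lra. }
  destruct (class_exists (Rpower Sx q) r _ Hr Hd0 Hd1) as [m Hm].
  exists m. split.
  - unfold in_Jb, J_lo, J_hi.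
    destruct (Rlt_dec _ _); [| tauto]. destruct (Rle_dec _ _); [reflexivity | tauto].
  - destruct (Nat.lt_ge_cases m N0) as [h | h]; [exact h |].
    exfalso. exact (HJ m i h Hi Hm).
Qed.

Theorem lemma1
  (Sx q r : R) (HS : 0 < Sx) (Hq : 0 < q < 1) (Hr : 4 <= r)
  (pi : nat -> R -> R)
  (Hpi : forall (k : nat) (x : R), 0 <= x <= Sx -> is_pi Sx q r k x (pi k x))
  (X : R -> R) (c : R) (Hc : 0 < c) (m0 : nat)
  (n : nat) (t : nat -> R)
  (Ht0 : 0 <= t O) (Htn : t n <= Sx)
  (Hinc : forall i, (1 <= i <= n)%nat -> t (pred i) < t i)
  (N0 : nat) (HN0 : (m0 <= N0)%nat)
  (HJ : forall m i, (N0 <= m)%nat -> (1 <= i <= n)%nat ->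
        ~ (J_lo Sx q r m < dist_q q (t (pred i)) (t i) /\
           dist_q q (t (pred i)) (t i) <= J_hi Sx q r m))
  (N : nat) (HN : (N0 <= N)%nat) (HNm : (m0 < N)%nat) :
  let tl := fun (i l : nat) => tlev pi N (t i) l in
  let mbar := fun m : nat => Nat.max m m0 in
  let V1 := sum_range 0 m0 (fun m => sum_J Sx q r t n m (fun i =>
              sum_range (S m) m0 (fun l => sum_s i (fun s =>
                Rabs (X (tl s l) - X (tl s (S l))))))) in
  let W1 := sum_range 0 m0 (fun m => sum_J Sx q r t n m (fun i =>
              Rabs (X (tl i (S m)) - X (tl (pred i) (S m))))) in
  let V2 := sum_range 0 N0 (fun m => sum_J Sx q r t n m (fun i =>
              sum_range (S (mbar m)) N (fun l => sum_s i (fun s =>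
                pos_part (Rabs (X (tl s l) - X (tl s (S l)))
                          - 2 ^ (mbar m) / 2 ^ l * (c / 3)))))) in
  let W2 := sum_range (S m0) N0 (fun m => sum_J Sx q r t n m (fun i =>
              pos_part (Rabs (X (tl i (S m)) - X (tl (pred i) (S m))) - c / 3))) in
  sum_range 1 n (fun i => pos_part (Rabs (X (t i) - X (t (pred i))) - c))
  <= V1 + V2 + W1 + W2
     + sum_range 1 n (fun i => sum_s i (fun s => Rabs (X (t s) - X (tl s (S N))))).
Proof.
  intros tl mbar V1 W1 V2 W2. unfold V1, W1, V2, W2, sum_J.
  (* write V1, V2, W1, W2 as sums over the increments i *)
  rewrite (sum_range_swap 0 m0 1 n), (sum_range_swap 0 m0 1 n),
          (sum_range_swap 0 N0 1 n), (sum_range_swap (S m0) N0 1 n).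
  rewrite <- !sum_range_plus.
  apply sum_range_le. intros i Hi.
  destruct (increment_class Sx q r t n N0 i ltac:(lra) ltac:(lra) Ht0 Htn Hinc HJ Hi)
    as [m [Hm HmN0]].
  exact (increment_estimate (X (t (pred i))) (X (t i))
           (fun l => X (tl (pred i) l)) (fun l => X (tl i l))
           (fun k => in_Jb Sx q r t k i) m m0 N0 N c Hc Hm ltac:(lia) HN0 HN HNm).
Qed.
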